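(* In the roundabout exploration process described in the context, for every $t\in[N]$ there are no three distinct agents $a_i,a_j,a_l\in A(t)$ with $D_i(t)\cap D_j(t)\cap D_l(t)\neq\emptyset$.
   Context: Let $n\ge 2$ and $k$ be natural numbers, $T$ a tree on an $n$-element vertex set $V$, and $N=2(n-1)$. Fix a root $r$ and a DFS tour of $T$ starting and ending at $r$ that traverses each edge of $T$ exactly twice, giving a cyclic vertex sequence $(v_1,\dots,v_N,v_{N+1})$ with $v_{N+1}=v_1=r$, and tour edges $e_i=\{v_i,v_{i+1}\}$ for $i\in[N]$. For $i,j\in[N]$ the circular interval $[\![i,j]\!]$ is $\{i,i+1,\dots,j\}$ if $i\le j$ and $\{i,\dots,N,1,\dots,j\}$ if $i>j$. Let $\langle G_1,\dots,G_N\rangle$ be graphs on $V$, each containing all but at most $k$ edges of $T$. Roundabout exploration process: agents $a_1,\dots,a_N$ with initial states $s_i(0)=i$. For steps $t=1,\dots,N$: (Movement) for every $i\in[N]$, if $s_i(t-1)=q$ then $s_i(t)=(q\bmod N)+1$ if $e_q\in E(G_t)$, and $s_i(t)=q$ otherwise. Let $D_i(t)=[\![i,s_i(t)]\!]$ and $D_i(0)=\{i\}$. (Elimination) $A(0)=\{a_1,\dots,a_N\}$; $A(t)$ is obtained from $A(t-1)$ by repeatedly removing an arbitrary agent $a_i$ of the current set with $D_i(t)\subseteq\bigcup D_j(t)$ over the other agents $a_j$ of the current set, until no such agent remains. *)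

From mathcomp Require Import all_boot.
Set Implicit Arguments. Unset Strict Implicit. Unset Printing Implicit Defensive.

Definition simple_graph (V : finType) (g : rel V) : Prop :=
  symmetric g /\ irreflexive g.

Definition edges (V : finType) (g : rel V) : {set {set V}} :=
  [set e : {set V} | [exists x : V, exists y : V, g x y && (e == [set x; y])]].

Definition acyclic (V : finType) (g : rel V) : Prop :=
  forall c : seq V, uniq c -> 3 <= size c -> ~~ cycle g c.

Definition is_tree (V : finType) (T : rel V) : Prop :=
  simple_graph T /\ (forall x y, connect T x y) /\ acyclic T.

Definition tour_edge (V : finType) (v : nat -> V) (q : nat) : {set V} :=
  [set v q; v q.+1].

Definition dfs_tour (V : finType) (T : rel V) (r : V) (N : nat)
    (v : nat -> V) : Prop :=
  [/\ v 1 = r, v N.+1 = r,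
      (forall q, 1 <= q <= N -> T (v q) (v q.+1)) &
      (forall e, e \in edges T ->
         count (fun q => tour_edge v q == e) (iota 1 N) = 2)].

Fixpoint pos (V : finType) (N : nat) (v : nat -> V) (G : nat -> rel V)
    (i t : nat) : nat :=
  match t with
  | 0 => i
  | t'.+1 =>
      let q := pos N v G i t' in
      if tour_edge v q \in edges (G t) then (q %% N).+1 else q
  end.

Definition cint (N i j : nat) : pred nat :=
  if i <= j then [pred q | i <= q <= j]
  else [pred q | (i <= q <= N) || (1 <= q <= j)].

Definition Dset (V : finType) (N : nat) (v : nat -> V) (G : nat -> rel V)
    (i t : nat) : pred nat :=
  cint N i (pos N v G i t).

(* Agents a_1..a_N are indexed by the elements 1..N of 'I_N.+1
   (index 0 is unused). *)
Definition agents0 (N : nat) : {set 'I_N.+1} := [set i : 'I_N.+1 | 0 < i].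

Definition removable (V : finType) (N : nat) (v : nat -> V) (G : nat -> rel V)
    (t : nat) (S : {set 'I_N.+1}) (i : 'I_N.+1) : Prop :=
  i \in S /\
  (forall q, q \in Dset N v G i t ->
     exists2 j : 'I_N.+1, j \in S :\ i & q \in Dset N v G j t).

Inductive elim_run (V : finType) (N : nat) (v : nat -> V) (G : nat -> rel V)
    (t : nat) : {set 'I_N.+1} -> {set 'I_N.+1} -> Prop :=
  | elim_done (S : {set 'I_N.+1}) :
      (forall i, ~ @removable V N v G t S i) -> @elim_run V N v G t S S
  | elim_step (S S' : {set 'I_N.+1}) (i : 'I_N.+1) :
      @removable V N v G t S i -> @elim_run V N v G t (S :\ i) S' ->
      @elim_run V N v G t S S'.

From mathcomp Require Import all_boot zify.
Set Implicit Arguments. Unset Strict Implicit. Unset Printing Implicit Defensive.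

(* An agent survives the elimination at time t only if its arc D_i(t) is not
   covered by the arcs of the other survivors.  Measured by clockwise distance
   from a point q, an arc through q consists of the points at distance at most
   b after q or at most a before q; among three arcs through q, the one whose
   extents a and b are each dominated by one of the other two arcs is covered
   by them. *)

Section CircularArcs.

Variable N : nat.

Definition cdist (x y : nat) : nat := if x <= y then y - x else y + N - x.

Lemma cint_bounds i j p : 1 <= i -> j <= N -> p \in cint N i j -> 1 <= p <= N.
Proof. by rewrite /cint; case: (leqP i j); rewrite inE /=; lia. Qed.

Lemma mem_cint_cdist i j q p :
    1 <= i <= N -> 1 <= j <= N -> 1 <= p <= N -> q \in cint N i j ->
  (p \in cint N i j) = (cdist q p <= cdist q j) || (N - cdist i q <= cdist q p).
Proof.
rewrite /cint /cdist; case: (leqP i j); case: (leqP i q); case: (leqP q j);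
  case: (leqP q p); rewrite !inE /= => *; apply/idP/idP; lia.
Qed.

Lemma cint_subU i j i1 j1 i2 j2 q :
    1 <= i <= N -> 1 <= j <= N -> 1 <= i1 <= N -> 1 <= j1 <= N ->
    1 <= i2 <= N -> 1 <= j2 <= N ->
    q \in cint N i j -> q \in cint N i1 j1 -> q \in cint N i2 j2 ->
    cdist i q <= maxn (cdist i1 q) (cdist i2 q) ->
    cdist q j <= maxn (cdist q j1) (cdist q j2) ->
  {subset cint N i j <= [predU cint N i1 j1 & cint N i2 j2]}.
Proof.
move=> Hi Hj Hi1 Hj1 Hi2 Hj2 Hq Hq1 Hq2 Hleft Hright p Hp.
have Hpr : 1 <= p <= N by apply: cint_bounds Hp; lia.
rewrite [p \in [predU _ & _]]inE; move: Hp.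
rewrite (mem_cint_cdist Hi Hj Hpr Hq) (mem_cint_cdist Hi1 Hj1 Hpr Hq1).
by rewrite (mem_cint_cdist Hi2 Hj2 Hpr Hq2); lia.
Qed.

Lemma cint_cover3 i1 j1 i2 j2 i3 j3 q :
    1 <= i1 <= N -> 1 <= j1 <= N -> 1 <= i2 <= N -> 1 <= j2 <= N ->
    1 <= i3 <= N -> 1 <= j3 <= N ->
    q \in cint N i1 j1 -> q \in cint N i2 j2 -> q \in cint N i3 j3 ->
  [\/ {subset cint N i1 j1 <= [predU cint N i2 j2 & cint N i3 j3]},
      {subset cint N i2 j2 <= [predU cint N i1 j1 & cint N i3 j3]} |
      {subset cint N i3 j3 <= [predU cint N i1 j1 & cint N i2 j2]}].
Proof.
move=> Hi1 Hj1 Hi2 Hj2 Hi3 Hj3 Hq1 Hq2 Hq3.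
set a1 := cdist i1 q; set a2 := cdist i2 q; set a3 := cdist i3 q.
set b1 := cdist q j1; set b2 := cdist q j2; set b3 := cdist q j3.
have [[]|[[]|[]]] :
    [/\ a1 <= maxn a2 a3 & b1 <= maxn b2 b3] \/
    [/\ a2 <= maxn a1 a3 & b2 <= maxn b1 b3] \/
    [/\ a3 <= maxn a1 a2 & b3 <= maxn b1 b2] by lia.
- by move=> *; apply: Or31; apply: (cint_subU (q := q)).
- by move=> *; apply: Or32; apply: (cint_subU (q := q)).
- by move=> *; apply: Or33; apply: (cint_subU (q := q)).
Qed.

End CircularArcs.

Section Exploration.

Variables (V : finType) (N : nat) (v : nat -> V) (G : nat -> rel V).

Lemma pos_bounds i t : 0 < N -> 1 <= i <= N -> 1 <= pos N v G i t <= N.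
Proof.
move=> N_gt0 i_bounds; elim: t => [|t IH] //=; case: ifP => // _.
by have := ltn_pmod (pos N v G i t) N_gt0; lia.
Qed.

Lemma elim_run_subset t (S S' : {set 'I_N.+1}) :
  elim_run v G t S S' -> S' \subset S.
Proof. by elim=> // S1 S2 i _ _ /subset_trans; apply; apply: subsetDl. Qed.

Lemma elim_runs_subset (A : nat -> {set 'I_N.+1}) :
    (forall t, 1 <= t <= N -> elim_run v G t (A t.-1) (A t)) ->
  forall t, t <= N -> A t \subset A 0.
Proof.
move=> runA; elim=> [|t IH] t_le //.
by apply: subset_trans (IH (ltnW t_le)); apply: elim_run_subset (runA t.+1 _).
Qed.

Variable t : nat.

Lemma elim_run_stuck (S S' : {set 'I_N.+1}) :
  elim_run v G t S S' -> forall i, ~ removable v G t S' i.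
Proof. by elim. Qed.

Lemma removable_of_subU (S : {set 'I_N.+1}) (i j l : 'I_N.+1) :
    i \in S -> j \in S -> l \in S -> j != i -> l != i ->
    {subset Dset N v G i t <= [predU Dset N v G j t & Dset N v G l t]} ->
  removable v G t S i.
Proof.
move=> Si Sj Sl ji li cover; split=> // q /cover; rewrite inE => /orP[qj | ql].
- by exists j; rewrite // in_setD1 ji.
- by exists l; rewrite // in_setD1 li.
Qed.

End Exploration.

Theorem lemma6 (V : finType) (n k : nat) (T : rel V) (r : V)
    (v : nat -> V) (G : nat -> rel V) (A : nat -> {set 'I_(2 * (n - 1)).+1}) :
  #|V| = n -> 2 <= n ->
  is_tree T ->
  dfs_tour T r (2 * (n - 1)) v ->
  (forall t, 1 <= t <= 2 * (n - 1) ->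
     simple_graph (G t) /\ #|edges T :\: edges (G t)| <= k) ->
  A 0 = agents0 (2 * (n - 1)) ->
  (forall t, 1 <= t <= 2 * (n - 1) ->
     @elim_run V (2 * (n - 1)) v G t (A t.-1) (A t)) ->
  forall t, 1 <= t <= 2 * (n - 1) ->
  forall i j l : 'I_(2 * (n - 1)).+1,
    i \in A t -> j \in A t -> l \in A t ->
    i != j -> j != l -> i != l ->
    ~ (exists q, [/\ q \in Dset (2 * (n - 1)) v G i t,
                     q \in Dset (2 * (n - 1)) v G j t &
                     q \in Dset (2 * (n - 1)) v G l t]).
Proof.
set N := 2 * (n - 1).
move=> _ n_ge2 _ _ _ A0 runA t t_bounds i j l Ai Aj Al ij jl il [q [qi qj ql]].
have N_gt0 : 0 < N by lia.
have agent_bounds a : a \in A t -> 1 <= a <= N.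
  have /subsetP At_agents := elim_runs_subset runA (proj2 (andP t_bounds)).
  by move/At_agents; rewrite A0 inE => ->; rewrite -ltnS ltn_ord.
have endpoint_bounds a : a \in A t -> 1 <= a <= N /\ 1 <= pos N v G a t <= N.
  by move/agent_bounds => a_bounds; split=> //; apply: pos_bounds.
have [i_in si_in] := endpoint_bounds i Ai.
have [j_in sj_in] := endpoint_bounds j Aj.
have [l_in sl_in] := endpoint_bounds l Al.
have stuck := elim_run_stuck (runA t t_bounds).
have ji : j != i by rewrite eq_sym.
have lj : l != j by rewrite eq_sym.
have li : l != i by rewrite eq_sym.
case: (cint_cover3 i_in si_in j_in sj_in l_in sl_in qi qj ql) => cover.
- exact: (stuck i) (removable_of_subU Ai Aj Al ji li cover).
- exact: (stuck j) (removable_of_subU Aj Ai Al ij lj cover).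
- exact: (stuck l) (removable_of_subU Al Ai Aj il jl cover).
Qed.
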